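(* Let $TT_n$ be the transitive tournament on $n$ vertices and let $(\alpha_1,\alpha_2)\in\mathbb{Z}^2$ with $\alpha_1\alpha_2<0$, $|\alpha_1|\neq|\alpha_2|$ and $|\alpha_1|+|\alpha_2|=n-1$. Then the number of oriented paths of type $P(\alpha_1,\alpha_2)$ in $TT_n$ is $\binom{n-1}{|\alpha_1|}$.
   Context: The transitive tournament $TT_n$ has vertices $v_1,\dots,v_n$ and arcs $(v_i,v_j)$ for all $i<j$. An oriented path is a digraph whose underlying graph is a path; a block is a maximal directed subpath. An oriented path $P$ is of type $P(\alpha_1,\alpha_2)$ if $P$ is the concatenation of two blocks $I_1,I_2$, where $I_i$ has ends $x_i,y_i$, $I_1\cap I_2=\{y_1\}=\{x_2\}$, $I_i$ has length $|\alpha_i|$, and $\alpha_i>0$ iff $I_i$ is directed from $x_i$ to $y_i$. Paths are counted as distinct when their arc sets differ. *)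

From mathcomp Require Import all_boot all_order all_algebra.
Set Implicit Arguments. Unset Strict Implicit. Unset Printing Implicit Defensive.
Import Order.TTheory GRing.Theory Num.Theory.

Definition TT (n : nat) : rel 'I_n := fun u v => (u < v)%N.

(* Arc set of the oriented path with vertex sequence p_0, ..., p_{|a1|+|a2|}:
   the i-th edge {p_i, p_{i+1}} belongs to block I_1 if i < |a1|, else to I_2;
   it is oriented forward (p_i -> p_{i+1}) iff the sign of the block's
   alpha is positive. *)
Definition path_arcs (T : finType) (a1 a2 : int)
    (p : {ffun 'I_(`|a1| + `|a2|).+1 -> T}) : {set T * T} :=
  [set (let u := p (inord i) in let v := p (inord i.+1) in
        if (i < `|a1|)%N then (if (0 < a1)%R then (u, v) else (v, u))
        else (if (0 < a2)%R then (u, v) else (v, u)))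
   | i : 'I_(`|a1| + `|a2|)].

(* A is (the arc set of) an oriented path of type P(a1,a2) in the digraph D:
   both blocks are nonempty and of opposite directions (so both are maximal
   directed subpaths), the vertices are pairwise distinct, and all arcs are
   arcs of D. *)
Definition is_path_of_type (T : finType) (D : rel T) (a1 a2 : int)
    (A : {set T * T}) : bool :=
  [&& a1 != 0%R, a2 != 0%R, (0 < a1)%R != (0 < a2)%R &
   [exists p : {ffun 'I_(`|a1| + `|a2|).+1 -> T},
     [&& injectiveb p, A == path_arcs p & [forall e in A, D e.1 e.2]]]].

From mathcomp Require Import all_boot all_order all_algebra.
From mathcomp Require Import zify.
Import Order.TTheory GRing.Theory Num.Theory.
Set Implicit Arguments. Unset Strict Implicit. Unset Printing Implicit Defensive.

(* Put k = |a1| and m = |a2|.  A path of type P(a1, a2) in TT_n has k + m + 1 = n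
   vertices, so its vertex sequence p_0, ..., p_{k+m} is a permutation of the
   vertices which, for a1 > 0, increases up to p_k and decreases afterwards (for
   a1 < 0 the order is reversed); p_k is then the extreme vertex.  Such a unimodal
   permutation is determined by the set {p_0, ..., p_{k-1}}, which can be any
   k-subset of the n - 1 other vertices: there are binomial(n - 1, k) of them.
   Different unimodal permutations have different arc sets, because the arc set
   determines the vertex sequence up to the reflection of the path, and the
   reflection would move the peak from position k to position m <> k. *)

Definition orient (T : Type) (b : bool) (r : rel T) : rel T :=
  if b then r else fun x y => r y x.

Lemma orient_trans (T : Type) b (r : rel T) :
  transitive r -> transitive (orient b r).
Proof. by case: b => //= r_trans y x z ryx rzy; apply: r_trans rzy ryx. Qed.

Lemma orient_irr (T : Type) b (r : rel T) :
  irreflexive r -> irreflexive (orient b r).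
Proof. by case: b. Qed.

Definition unimodal (T : Type) (r : rel T) (k : nat) (s : seq T) : bool :=
  sorted r (take k.+1 s) && sorted (fun x y => r y x) (drop k s).

Lemma mem_drop_uniq (T : eqType) n (s : seq T) x : uniq s ->
  (x \in drop n s) = (x \in s) && (x \notin take n s).
Proof.
rewrite -{1 3}(cat_take_drop n s) cat_uniq mem_cat => /and3P[_ /hasPn disj _].
by case: (boolP (x \in drop n s)) => [/disj/negbTE -> | _]; rewrite ?orbF ?andbN.
Qed.

Section Unimodal.
Variables (T : eqType) (r : rel T).
Hypotheses (r_trans : transitive r) (r_irr : irreflexive r).

Let flip_trans : transitive (fun x y => r y x) := @orient_trans T false r r_trans.

Section Peak.
Variables (x0 : T) (k : nat) (s : seq T).
Hypotheses (lt_k_s : k < size s) (s_uni : unimodal r k s).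

Lemma unimodal_rise_lt_peak x : x \in take k s -> r x (nth x0 s k).
Proof.
case/andP: s_uni => + _; rewrite (take_nth x0 lt_k_s) -cats1.
by rewrite sorted_pairwise // pairwise_cat allrel1r => /and3P[/allP/(_ x)].
Qed.

Lemma unimodal_fall_lt_peak x : x \in drop k.+1 s -> r x (nth x0 s k).
Proof.
case/andP: s_uni => _; rewrite (drop_nth x0 lt_k_s) /= path_sortedE //.
by case/andP=> /allP/(_ x).
Qed.

Lemma unimodal_lt_peak x : x \in s -> x != nth x0 s k -> r x (nth x0 s k).
Proof.
rewrite -{1}(cat_take_drop k s) (drop_nth x0 lt_k_s) mem_cat in_cons.
case/or3P=> [/unimodal_rise_lt_peak // | -> // | /unimodal_fall_lt_peak //].
Qed.

End Peak.

Lemma unimodal_peak_eq x0 k s1 s2 : k < size s1 -> k < size s2 -> s1 =i s2 ->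
  unimodal r k s1 -> unimodal r k s2 -> nth x0 s1 k = nth x0 s2 k.
Proof.
move=> lt_k_s1 lt_k_s2 eq_s12 uni1 uni2; apply/eqP; apply: contraT => neq12.
have s1k_in_s2 : nth x0 s1 k \in s2 by rewrite -eq_s12 mem_nth.
have s2k_in_s1 : nth x0 s2 k \in s1 by rewrite eq_s12 mem_nth.
have lt12 := unimodal_lt_peak (x0 := x0) lt_k_s2 uni2 s1k_in_s2 neq12.
rewrite eq_sym in neq12.
have lt21 := unimodal_lt_peak (x0 := x0) lt_k_s1 uni1 s2k_in_s1 neq12.
by rewrite -(r_irr (nth x0 s1 k)) (r_trans lt12 lt21).
Qed.

Lemma unimodal_eq k s1 s2 : uniq s1 -> uniq s2 -> s1 =i s2 ->
  take k s1 =i take k s2 -> unimodal r k s1 -> unimodal r k s2 -> s1 = s2.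
Proof.
move=> uniq1 uniq2 eq_s12 eq_take /andP[rise1 fall1] /andP[rise2 fall2].
have take_eq : take k s1 = take k s2.
  by apply: (irr_sorted_eq r_trans r_irr) => //;
    rewrite -(take_takel _ (leqnSn k)) take_sorted.
have drop_eq : drop k s1 = drop k s2.
  apply: (irr_sorted_eq flip_trans r_irr) => // x.
  by rewrite !mem_drop_uniq // eq_s12 take_eq.
by rewrite -(cat_take_drop k s1) take_eq drop_eq cat_take_drop.
Qed.

Lemma unimodal_cat_peak s1 x s2 : sorted r s1 -> sorted r s2 ->
  all (r^~ x) s1 -> all (r^~ x) s2 -> unimodal r (size s1) (s1 ++ x :: rev s2).
Proof.
move=> rise1 rise2 below1 below2.
rewrite /unimodal -cat_rcons take_size_cat ?size_rcons // cat_rcons.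
rewrite drop_size_cat // -cats1 sorted_pairwise // pairwise_cat allrel1r below1.
by rewrite -sorted_pairwise //= rise1 path_sortedE // all_rev below2 rev_sorted.
Qed.

End Unimodal.

Lemma nth_codom_ord (T : Type) n (f : 'I_n.+1 -> T) x0 i :
  i <= n -> nth x0 (codom f) i = f (inord i).
Proof.
move=> le_in; rewrite codomE (nth_map ord0) ?size_enum_ord //.
by congr f; apply: val_inj; rewrite /= nth_enum_ord ?inordK.
Qed.

Lemma codom_nth (T : Type) n x0 (s : seq T) :
  size s = n -> codom [ffun i : 'I_n => nth x0 s i] = s.
Proof.
move=> <-; rewrite codomE -[RHS](mkseq_nth x0) /mkseq -val_enum_ord -map_comp.
by apply: eq_map => i; rewrite ffunE.
Qed.

Lemma unimodal_codomE (T : Type) (r : rel T) k m (p : {ffun 'I_(k + m).+1 -> T}) :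
  unimodal r k (codom p) =
  [forall i : 'I_(k + m), if i < k then r (p (inord i)) (p (inord i.+1))
                          else r (p (inord i.+1)) (p (inord i))].
Proof.
have size_p : size (codom p) = (k + m).+1 by rewrite size_codom card_ord.
have size_rise : size (take k.+1 (codom p)) = k.+1.
  by rewrite size_takel // size_p ltnS leq_addr.
have size_fall : size (drop k (codom p)) = m.+1 by rewrite size_drop size_p; lia.
have nth_rise i : i <= k -> nth (p ord0) (take k.+1 (codom p)) i = p (inord i).
  by move=> le_ik; rewrite nth_take // nth_codom_ord //; lia.
have nth_fall i : i <= m -> nth (p ord0) (drop k (codom p)) i = p (inord (k + i)).
  by move=> le_im; rewrite nth_drop nth_codom_ord //; lia.
apply/andP/forallP => [[/(sortedP (p ord0)) rise /(sortedP (p ord0)) fall] i | steps].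
  have lt_i := ltn_ord i; case: ifP => lt_ik.
    by have := rise i; rewrite size_rise !nth_rise ?(ltnW lt_ik) //; apply.
  have le_ki : k <= i by rewrite leqNgt lt_ik.
  by have := fall (i - k); rewrite size_fall !nth_fall ?addnS ?subnKC //;
    [apply | ..]; lia.
split; apply/(sortedP (p ord0)) => i.
  rewrite size_rise ltnS => lt_ik; rewrite !nth_rise; try lia.
  by have := steps (Ordinal (_ : i < k + m)); rewrite /= lt_ik; apply; lia.
rewrite size_fall => lt_im; rewrite !nth_fall ?addnS; try lia.
have := steps (Ordinal (_ : k + i < k + m)) => /=.
by case: ifP => [| _]; [lia | apply; lia].
Qed.

Definition nat_adj (i j : nat) : bool := (i.+1 == j) || (j.+1 == i).

Lemma path_graph_aut_id N (f : nat -> nat) :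
  (forall i, i < N -> f i < N) ->
  (forall i j, i < N -> j < N -> f i = f j -> i = j) ->
  (forall i, i.+1 < N -> nat_adj (f i) (f i.+1)) ->
  f 0 < f 1 -> forall i, i < N -> f i = i.
Proof.
move=> f_lt f_inj f_adj f01 i lt_iN.
have shift j : j.+1 < N -> f j = f 0 + j /\ f j.+1 = f 0 + j.+1.
  elim: j => [|j IH] lt_jN.
    by case/orP: (f_adj 0 lt_jN) => /eqP f1; split; lia.
  have [fj fj1] := IH (ltnW lt_jN); split=> //.
  case/orP: (f_adj j.+1 lt_jN) => /eqP fj2; first lia.
  have := f_inj j j.+2 (ltnW (ltnW lt_jN)) lt_jN; lia.
have {}shift j : j < N -> f j = f 0 + j.
  by case: j => [|j] lt_jN; [rewrite addn0 | case: (shift j lt_jN)].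
rewrite (shift i lt_iN); have := f_lt N.-1; rewrite shift; lia.
Qed.

Lemma path_graph_aut N (f : nat -> nat) :
  (forall i, i < N -> f i < N) ->
  (forall i j, i < N -> j < N -> f i = f j -> i = j) ->
  (forall i, i.+1 < N -> nat_adj (f i) (f i.+1)) ->
  (forall i, i < N -> f i = i) \/ (forall i, i < N -> f i = N.-1 - i).
Proof.
move=> f_lt f_inj f_adj.
have [N_le1 | N_gt1] := leqP N 1.
  by left=> i lt_iN; have := f_lt i lt_iN; lia.
case/orP: (f_adj 0 N_gt1) => /eqP f01.
  by left; apply: path_graph_aut_id => //; lia.
right=> i lt_iN; suff : N.-1 - f i = i by have := f_lt i lt_iN; lia.
apply: (@path_graph_aut_id N (fun j => N.-1 - f j)) => //.
- by move=> j lt_jN; lia.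
- move=> j l lt_jN lt_lN eq_jl; apply: f_inj => //.
  by have := f_lt j lt_jN; have := f_lt l lt_lN; lia.
- move=> j lt_jN; have := f_adj j lt_jN; rewrite /nat_adj.
  by have := f_lt j (ltnW lt_jN); have := f_lt j.+1 lt_jN; lia.
- by have := f_lt 0 (ltnW N_gt1); have := f_lt 1 N_gt1; lia.
Qed.

Definition path_edge (T : finType) n (p : {ffun 'I_n.+1 -> T}) (x y : T) : bool :=
  [exists i : 'I_n, ((x, y) == (p (inord i), p (inord i.+1)))
                    || ((y, x) == (p (inord i), p (inord i.+1)))].

Lemma path_edge_inj (T : finType) n (p : {ffun 'I_n.+1 -> T}) (i j : 'I_n.+1) :
  injective p -> path_edge p (p i) (p j) = nat_adj i j.
Proof.
move=> p_inj; have [lt_i lt_j] := (ltn_ord i, ltn_ord j).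
apply/existsP/idP => [[l] | adj_ij].
  have lt_l := ltn_ord l.
  by case/orP=> /eqP[/p_inj/(congr1 val) + /p_inj/(congr1 val)];
    rewrite /= !inordK /nat_adj //; lia.
have lt_min : minn i j < n by move: adj_ij; rewrite /nat_adj; lia.
exists (Ordinal lt_min); move: adj_ij; rewrite /nat_adj /=.
by case/orP=> /eqP adj_ij; apply/orP; [left | right]; apply/eqP;
  congr (p _, p _); apply/val_inj; rewrite /= inordK; lia.
Qed.

Lemma unimodal_perm_path_edge_inj k m (r : rel 'I_(k + m).+1)
    (p q : {ffun 'I_(k + m).+1 -> 'I_(k + m).+1}) :
  transitive r -> irreflexive r -> k != m -> injective p -> injective q ->
  unimodal r k (codom p) -> unimodal r k (codom q) ->
  path_edge p =2 path_edge q -> p = q.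
Proof.
move=> r_trans r_irr k_neq_m p_inj q_inj p_uni q_uni pq_edge.
have le_k : k <= k + m := leq_addr m k.
(* sigma = q^-1 o p is an automorphism of the path graph on the positions; it
   fixes the peak position k, so it cannot be the reflection i |-> k + m - i. *)
pose sigma i : nat := invF q_inj (p (inord i)).
have sigma_k : sigma k = k.
  have size_codom_N (f : 'I_(k + m).+1 -> 'I_(k + m).+1) :
      size (codom f) = (k + m).+1 by rewrite size_codom card_ord.
  have peak : p (inord k) = q (inord k).
    rewrite -!(nth_codom_ord _ (p ord0)) //.
    apply: (unimodal_peak_eq r_trans r_irr) => //; rewrite ?size_codom_N //.
    by move=> x; rewrite !injF_onto.
  by rewrite /sigma peak invF_f /= inordK.
have sigma_lt i : i < (k + m).+1 -> sigma i < (k + m).+1.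
  by move=> _; exact: ltn_ord.
have sigma_inj i j : i < (k + m).+1 -> j < (k + m).+1 -> sigma i = sigma j -> i = j.
  move=> lt_i lt_j /val_inj/(congr1 q); rewrite !f_invF => /p_inj/(congr1 val).
  by rewrite /= !inordK.
have sigma_adj i : i.+1 < (k + m).+1 -> nat_adj (sigma i) (sigma i.+1).
  move=> lt_i; rewrite /sigma -(path_edge_inj _ _ q_inj) !f_invF -pq_edge.
  by rewrite path_edge_inj // !inordK ?(ltnW lt_i) // /nat_adj eqxx.
have [sigma_id | sigma_rev] := path_graph_aut sigma_lt sigma_inj sigma_adj.
  apply/ffunP => x; have := sigma_id x (ltn_ord x).
  by rewrite /sigma inord_val => /ord_inj sigma_x; rewrite -{2}sigma_x f_invF.
by move: k_neq_m; rewrite -{1}sigma_k sigma_rev ?ltnS //=; lia.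
Qed.

Section PathArcs.
Variables (T : finType) (a1 a2 : int).
Implicit Type p : {ffun 'I_(`|a1| + `|a2|).+1 -> T}.

Definition path_arc p (i : 'I_(`|a1| + `|a2|)) : T * T :=
  let u := p (inord i) in let v := p (inord i.+1) in
  if i < `|a1| then (if (0 < a1)%R then (u, v) else (v, u))
  else (if (0 < a2)%R then (u, v) else (v, u)).

Lemma path_arcsE p : path_arcs p = [set path_arc p i | i : 'I_(`|a1| + `|a2|)].
Proof. by []. Qed.

Lemma path_edge_arcs p x y :
  path_edge p x y = ((x, y) \in path_arcs p) || ((y, x) \in path_arcs p).
Proof.
rewrite path_arcsE; apply/existsP/idP => [[i /orP edge_i] | ].
  have : path_arc p i \in [set path_arc p j | j : 'I_(`|a1| + `|a2|)].
    exact: imset_f.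
  rewrite /path_arc.
  by do 2 case: ifP => _; case: edge_i => /eqP[-> ->] ->; rewrite ?orbT.
by case/orP=> /imsetP[i _ arc_i]; exists i; move: arc_i; rewrite /path_arc;
  do 2 case: ifP => _; case=> -> ->; rewrite !eqxx ?orbT.
Qed.

Hypothesis opposite : (0 < a2)%R = ~~ (0 < a1)%R.

Lemma path_arcs_unimodal (D : rel T) p :
  [forall e in path_arcs p, D e.1 e.2] =
  unimodal (orient (0 < a1)%R D) `|a1| (codom p).
Proof.
rewrite unimodal_codomE.
have arcD i : D (path_arc p i).1 (path_arc p i).2 =
    if i < `|a1| then orient (0 < a1)%R D (p (inord i)) (p (inord i.+1))
    else orient (0 < a1)%R D (p (inord i.+1)) (p (inord i)).
  by rewrite /path_arc /orient opposite; case: (i < _); case: (0 < a1)%R.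
apply/forallP/forallP => [arcs_D i | steps e].
  by rewrite -arcD; apply: (implyP (arcs_D _)); rewrite path_arcsE imset_f.
by apply/implyP; rewrite path_arcsE => /imsetP[i _ ->]; rewrite arcD.
Qed.

Lemma path_of_typeE (D : rel T) : a1 != 0%R -> a2 != 0%R ->
  [set A | is_path_of_type D a1 a2 A] =
  @path_arcs T a1 a2 @:
    [set p : {ffun _ -> T} | uniq (codom p) &&
                             unimodal (orient (0 < a1)%R D) `|a1| (codom p)].
Proof.
move=> a1_nz a2_nz; apply/setP => A.
rewrite inE /is_path_of_type a1_nz a2_nz opposite (_ : _ != _ = true) /=; last first.
  by case: (0 < a1)%R.
apply/existsP/imsetP => [[p /and3P[p_inj /eqP-> arcs_D]] | [p]].
  by exists p; rewrite // inE -path_arcs_unimodal arcs_D andbT.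
rewrite inE -path_arcs_unimodal => /andP[p_inj arcs_D] ->.
by exists p; apply/and3P.
Qed.

End PathArcs.

Section TransitiveTournament.
Variables (n : nat) (b : bool).
Local Notation lt_b := (orient b (@TT n.+1)).

Lemma TT_trans : transitive (@TT n.+1).
Proof. by move=> y x z; apply: ltn_trans. Qed.

Lemma TT_irr : irreflexive (@TT n.+1).
Proof. exact: ltnn. Qed.

Definition TT_top : 'I_n.+1 := if b then ord_max else ord0.

Lemma orient_TT_top x : lt_b x TT_top = (x != TT_top).
Proof.
rewrite /orient /TT /TT_top -val_eqE; have := ltn_ord x.
by case: b => /= lt_x; apply/idP/idP; lia.
Qed.

Lemma orient_TT_topN x : lt_b TT_top x = false.
Proof. by rewrite /orient /TT /TT_top; have := ltn_ord x; case: b => /=; lia. Qed.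

Definition TT_sort (A : {set 'I_n.+1}) : seq 'I_n.+1 :=
  if b then enum A else rev (enum A).

Lemma perm_TT_sort A : perm_eq (TT_sort A) (enum A).
Proof. by rewrite /TT_sort; case: b; rewrite ?perm_rev. Qed.

Lemma TT_sort_sorted A : sorted lt_b (TT_sort A).
Proof.
have enum_sorted : sorted (@TT n.+1) (enum A).
  have : sorted ltn (map val (enum 'I_n.+1)).
    by rewrite val_enum_ord iota_ltn_sorted.
  by rewrite sorted_map enumT => /(sorted_filter TT_trans) ->.
by rewrite /TT_sort /orient; case: b; rewrite ?rev_sorted.
Qed.

End TransitiveTournament.

Section Counting.
Variables (k m : nat) (b : bool).
Local Notation vertex := 'I_(k + m).+1.
Local Notation lt_b := (orient b (@TT (k + m).+1)).
Local Notation top := (TT_top (k + m) b).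

Let lt_b_trans : transitive lt_b := orient_trans (@TT_trans _).
Let lt_b_irr : irreflexive lt_b := orient_irr b (@TT_irr _).

Definition unimodal_perms : {set {ffun vertex -> vertex}} :=
  [set p : {ffun vertex -> vertex} | uniq (codom p) && unimodal lt_b k (codom p)].

Definition initial_run (p : {ffun vertex -> vertex}) : {set vertex} :=
  [set x in take k (codom p)].

Lemma initial_run_inj : {in unimodal_perms &, injective initial_run}.
Proof.
move=> p q; rewrite !inE => /andP[p_inj p_uni] /andP[q_inj q_uni] /setP pq_run.
apply: (can_inj fgraphK); apply/val_inj; rewrite /= -!codom_ffun.
apply: (unimodal_eq lt_b_trans lt_b_irr p_inj q_inj _ _ p_uni q_uni).
  by move=> x; rewrite !injF_onto //; apply/injectiveP.
by move=> x; have := pq_run x; rewrite !inE.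
Qed.

Lemma initial_run_draws p : p \in unimodal_perms ->
  (initial_run p \subset [set~ top]) && (#|initial_run p| == k).
Proof.
rewrite inE => /andP[p_inj p_uni].
have lt_k : k < size (codom p) by rewrite size_codom card_ord ltnS leq_addr.
apply/andP; split.
  apply/subsetP => x; rewrite !inE.
  move/(unimodal_rise_lt_peak lt_b_trans ord0 lt_k p_uni).
  by apply: contraTneq => ->; rewrite orient_TT_topN.
by rewrite cardsE (card_uniqP _) ?take_uniq // size_takel // ltnW.
Qed.

Lemma initial_run_onto (S : {set vertex}) : S \subset [set~ top] -> #|S| = k ->
  exists2 p, p \in unimodal_perms & initial_run p = S.
Proof.
move=> S_top S_k; set R := [set~ top] :\: S.
have mem_sort (A : {set vertex}) : TT_sort b A =i A.
  by move=> x; rewrite (perm_mem (perm_TT_sort _ _)) mem_enum.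
have size_sort (A : {set vertex}) : size (TT_sort b A) = #|A|.
  by rewrite (perm_size (perm_TT_sort _ _)) cardE.
have uniq_sort (A : {set vertex}) : uniq (TT_sort b A).
  by rewrite (perm_uniq (perm_TT_sort _ _)) enum_uniq.
have below_top (A : {set vertex}) :
    A \subset [set~ top] -> all (lt_b^~ top) (TT_sort b A).
  move=> A_top; apply/allP => x; rewrite mem_sort orient_TT_top.
  by move/(subsetP A_top); rewrite !inE.
set s := TT_sort b S ++ top :: rev (TT_sort b R).
have size_s : size s = (k + m).+1.
  rewrite size_cat /= size_rev !size_sort cardsDS // cardsC1 card_ord S_k; lia.
have codom_s : codom [ffun i : vertex => nth top s i] = s by apply: codom_nth.
exists [ffun i : vertex => nth top s i]; rewrite /initial_run ?inE codom_s.
  apply/andP; split.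
    rewrite cat_uniq /= mem_rev rev_uniq !uniq_sort !mem_sort !inE eqxx /= andbT.
    have top_S : top \notin S by apply/negP => /(subsetP S_top); rewrite !inE eqxx.
    rewrite (negbTE top_S) andbF /= andbT.
    by apply/hasPn => x; rewrite mem_rev !mem_sort !inE => /andP[].
  have := unimodal_cat_peak lt_b_trans (TT_sort_sorted b S) (TT_sort_sorted b R)
    (below_top S S_top) (below_top R (subsetDl _ _)).
  by rewrite size_sort S_k.
by apply/setP => x; rewrite inE take_size_cat ?size_sort // mem_sort.
Qed.

Lemma card_unimodal_perms : #|unimodal_perms| = 'C(k + m, k).
Proof.
have runs : initial_run @: unimodal_perms =
    [set S : {set vertex} | S \subset [set~ top] & #|S| == k].
  apply/setP => S; rewrite inE.
  apply/imsetP/andP => [[p p_uni ->] | [S_top /eqP S_k]].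
    exact/andP/initial_run_draws.
  by have [p p_uni <-] := initial_run_onto S_top S_k; exists p.
by rewrite -(card_in_imset initial_run_inj) runs cards_draws cardsC1 card_ord.
Qed.

End Counting.

Lemma opposite_signs (a1 a2 : int) : (a1 * a2 < 0)%R ->
  [/\ a1 != 0%R, a2 != 0%R & (0 < a2)%R = ~~ (0 < a1)%R].
Proof. by move=> neg; split; try apply/idP/idP; lia. Qed.

Theorem proposition2 (n : nat) (a1 a2 : int) :
  (a1 * a2 < 0)%R ->
  `|a1|%N != `|a2|%N ->
  (`|a1| + `|a2|)%N = n.-1 ->
  #|[set A : {set 'I_n * 'I_n} | is_path_of_type (@TT n) a1 a2 A]| = 'C(n.-1, `|a1|).
Proof.
move=> /opposite_signs[a1_nz a2_nz opposite] a12_neq.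
case: n => [|n] /= sum_n; first by move: a1_nz; rewrite -absz_gt0; lia.
subst n; rewrite path_of_typeE // card_in_imset; first exact: card_unimodal_perms.
move=> p q; rewrite !inE => /andP[p_inj p_uni] /andP[q_inj q_uni] pq_arcs.
apply: (unimodal_perm_path_edge_inj (orient_trans (@TT_trans _))
  (orient_irr _ (@TT_irr _)) a12_neq (injectiveP _ p_inj) (injectiveP _ q_inj)
  p_uni q_uni).
by move=> x y; rewrite !path_edge_arcs pq_arcs.
Qed.
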